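(* Let $m$ be a number and $p\ge 0$ an integer, and suppose the ball $\langle m;-\frac{1}{2^p}\rangle$ is balanced. Then $\langle m;-\frac{1}{2^p}\rangle\mathbin{:}\underline{0}\triangleq\langle m;-\frac{1}{2^{p+1}}\rangle$, and $\langle m;-\frac{1}{2^{p+1}}\rangle$ is also balanced.
   Context: Games are short normal-play combinatorial games, written $\{L\mid R\}$, with disjunctive sum $G+H\cong\{L(G)+H,G+L(H)\mid R(G)+H,G+R(H)\}$ and negation $-G\cong\{-R(G)\mid-L(G)\}$. Ordinal sum: $G\mathbin{:}H\cong\{L(G),\,G\mathbin{:}L(H)\mid R(G),\,G\mathbin{:}R(H)\}$. A number is a game with $G^L<G<G^R$ for all options; values are dyadic rationals. For numbers $m,\Delta$, the ball $\langle m;\Delta\rangle$ is the game $\{x\mid y\}$ with $x,y$ the canonical forms of $m+\Delta$, $m-\Delta$; it is balanced if $\langle m;\Delta\rangle+\langle m;\Delta\rangle=m+m$. $\underline{0}$ is the literal game $1+(-1)\cong\{-1\mid 1\}$ (canonical $1\cong\{0\mid\}$, $-1\cong\{\mid 0\}$). Equivalence modulo domination: $G\triangleq H$ means that in $G+(-H)$, for every move by either player as first player in one summand, the other player has a response in the other summand after which the responder wins. *)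

From Stdlib Require List.
From mathcomp Require Import all_boot all_order all_algebra.
Set Implicit Arguments. Unset Strict Implicit. Unset Printing Implicit Defensive.
Import Order.TTheory GRing.Theory Num.Theory.

Inductive game : Type := Game of seq game & seq game.

Definition leftopts (G : game) : seq game := let: Game L _ := G in L.
Definition rightopts (G : game) : seq game := let: Game _ R := G in R.

(* win G = (Left moving first wins G, Right moving first wins G),
   under normal play (a player with no move loses). *)
Fixpoint win (G : game) : bool * bool :=
  let: Game L R := G in
  (has (fun GL => ~~ (win GL).2) L, has (fun GR => ~~ (win GR).1) R).

Definition lwins_first (G : game) : bool := (win G).1.
Definition rwins_first (G : game) : bool := (win G).2.

Fixpoint gadd (G : game) : game -> game :=
  fix gaddG (H : game) : game :=
  match G, H with
  | Game GL GR, Game HL HR =>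
      Game ([seq gadd gl H | gl <- GL] ++ [seq gaddG hl | hl <- HL])
           ([seq gadd gr H | gr <- GR] ++ [seq gaddG hr | hr <- HR])
  end.

Fixpoint gneg (G : game) : game :=
  let: Game L R := G in Game [seq gneg gr | gr <- R] [seq gneg gl | gl <- L].

Fixpoint gord (G : game) (H : game) : game :=
  let: Game HL HR := H in
  Game (leftopts G ++ [seq gord G hl | hl <- HL])
       (rightopts G ++ [seq gord G hr | hr <- HR]).

Definition geq (G H : game) : Prop :=
  ~~ lwins_first (gadd G (gneg H)) /\ ~~ rwins_first (gadd G (gneg H)).

(* Equivalence modulo domination G ≜ H: in G + (-H), for every move by either
   player as first player in one summand, the other player has a response in
   the other summand after which the responder wins (i.e. the original first
   player, now to move, loses). *)
Definition eqdom (G H : game) : Prop :=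
  (forall gl, List.In gl (leftopts G) -> exists2 x, List.In x (rightopts (gneg H)) &
        ~~ lwins_first (gadd gl x)) /\
  (forall gr, List.In gr (rightopts G) -> exists2 y, List.In y (leftopts (gneg H)) &
        ~~ rwins_first (gadd gr y)) /\
  (forall y, List.In y (leftopts (gneg H)) -> exists2 gr, List.In gr (rightopts G) &
        ~~ lwins_first (gadd gr y)) /\
  (forall x, List.In x (rightopts (gneg H)) -> exists2 gl, List.In gl (leftopts G) &
        ~~ rwins_first (gadd gl x)).

Local Open Scope ring_scope.

Definition gzero : game := Game [::] [::].

(* canonical form of an integer: n+1 = {n|}, -(n+1) = {|-n} *)
Definition canon_int (n : int) : game :=
  match n with
  | Posz k => iter k (fun g => Game [:: g] [::]) gzero
  | Negz k => iter k.+1 (fun g => Game [::] [:: g]) gzero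
  end.

Fixpoint canon_dy (a : int) (k : nat) : game :=
  match k with
  | 0%N => canon_int a
  | k'.+1 =>
      if odd `|a|%N then
        Game [:: canon_dy ((a - 1) %/ 2)%Z k'] [:: canon_dy ((a + 1) %/ 2)%Z k']
      else canon_dy (a %/ 2)%Z k'
  end.

Definition dyadic (q : rat) : Prop := exists k : nat, denq q = (2 ^ k)%:Z.

Definition canon (q : rat) : game := canon_dy (numq q) (logn 2 `|denq q|%N).

Definition ball (m D : rat) : game := Game [:: canon (m + D)] [:: canon (m - D)].

Definition balanced (m D : rat) : Prop :=
  geq (gadd (ball m D) (ball m D)) (gadd (canon m) (canon m)).

(* the literal game 0-underline = 1 + (-1) = {-1 | 1} *)
Definition gone : game := Game [:: gzero] [::].
Definition gmone : game := Game [::] [:: gzero].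
Definition zero_ul : game := Game [:: gmone] [:: gone].

(* Write B = <m; -2^-p> = {m - 2^-p | m + 2^-p} and let 2^e be the denominator
   of m.  The relation "Left wins H - G moving second" is a preorder invariant
   under translation, because disjunctive sum is commutative and associative up
   to reordering of options and G - G is a second-player win.  On canonical forms
   it is the order of the rationals, by induction along the options q -/+ 2^-e(q).
   B is always comparable with m, so B + B = m + m forces B = m, which happens
   exactly when e <= p.  Then m -/+ 2^-(p+1) = {m - 2^-p | m} resp. {m | m + 2^-p},
   and the new options B : -1 = {m - 2^-p | m + 2^-p, B} and
   B : 1 = {m - 2^-p, B | m + 2^-p} of B : 0 equal m -/+ 2^-(p+1); this is the
   domination equivalence, and <m; -2^-(p+1)> = m is balanced as well. *)

From Pilot Require Import Defs.
From mathcomp Require Import all_boot all_order all_algebra.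
From mathcomp Require Import zify ring lra.
From Stdlib Require List.
Set Implicit Arguments. Unset Strict Implicit. Unset Printing Implicit Defensive.
Import Order.TTheory GRing.Theory Num.Theory.
Local Open Scope ring_scope.

Notation lw := lwins_first.
Notation rw := rwins_first.

(* The generated [game_ind] has no induction hypotheses for the options,
   which are nested inside [seq]. *)
Definition game_tree_ind (P : game -> Prop)
    (IH : forall L R, (forall g, List.In g L -> P g) -> (forall g, List.In g R -> P g) ->
          P (Game L R)) :
  forall G, P G :=
  fix ind G := let: Game L R := G in
    let fix ind_in s : forall g, List.In g s -> P g :=
      if s is x :: s' return forall g, List.In g s -> P g then
        fun g i => match i with
                   | or_introl e => eq_ind x P (ind x) g e
                   | or_intror i' => ind_in s' g i'
                   end
      else fun g i => False_ind _ i
    in IH L R (ind_in L) (ind_in R).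

Lemma In_cat (T : Type) (x : T) s1 s2 :
  List.In x (s1 ++ s2) <-> List.In x s1 \/ List.In x s2.
Proof. exact: List.in_app_iff. Qed.

Lemma In_map (T U : Type) (f : T -> U) s y :
  List.In y (map f s) <-> exists2 x, List.In x s & y = f x.
Proof. by rewrite List.in_map_iff; split=> -[x]; [case=> <- | move=> ? ->]; exists x. Qed.

Lemma has_In (T : Type) (p : pred T) s : has p s <-> exists2 x, List.In x s & p x.
Proof.
split=> [/List.existsb_exists [x []] | [x xs px]]; first by exists x.
by apply/List.existsb_exists; exists x.
Qed.

Lemma all_In (T : Type) (p : pred T) s : all p s <-> forall x, List.In x s -> p x.
Proof. exact: List.forallb_forall. Qed.

Lemma eq_map_In (T U : Type) (f g : T -> U) s :
  (forall x, List.In x s -> f x = g x) -> map f s = map g s.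
Proof. exact: List.map_ext_in. Qed.

Lemma In_mem (T : eqType) (x : T) s : x \in s -> List.In x s.
Proof. by elim: s => //= y s IH; rewrite inE => /orP [/eqP -> | /IH]; [left | right]. Qed.

Lemma lwE L R : lw (Game L R) = has (fun g => ~~ rw g) L. Proof. by []. Qed.
Lemma rwE L R : rw (Game L R) = has (fun g => ~~ lw g) R. Proof. by []. Qed.

Lemma gaddE GL GR HL HR : gadd (Game GL GR) (Game HL HR) =
  Game (map (gadd^~ (Game HL HR)) GL ++ map (gadd (Game GL GR)) HL)
       (map (gadd^~ (Game HL HR)) GR ++ map (gadd (Game GL GR)) HR).
Proof. by []. Qed.

Arguments gadd : simpl never.

Lemma gnegE L R : gneg (Game L R) = Game (map gneg R) (map gneg L).
Proof. by []. Qed.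

Lemma lw_addE GL GR HL HR : lw (gadd (Game GL GR) (Game HL HR)) =
  has (fun g => ~~ rw (gadd g (Game HL HR))) GL || has (fun h => ~~ rw (gadd (Game GL GR) h)) HL.
Proof. by rewrite gaddE lwE has_cat !has_map. Qed.

Lemma rw_addE GL GR HL HR : rw (gadd (Game GL GR) (Game HL HR)) =
  has (fun g => ~~ lw (gadd g (Game HL HR))) GR || has (fun h => ~~ lw (gadd (Game GL GR) h)) HR.
Proof. by rewrite gaddE rwE has_cat !has_map. Qed.

(** * Game trees up to reordering of options *)

Definition lift_rel (T : Type) (r : T -> T -> Prop) (s t : seq T) :=
  (forall g, List.In g s -> exists2 h, List.In h t & r g h) /\
  (forall h, List.In h t -> exists2 g, List.In g s & r g h).

(* Disjunctive sum is commutative and associative only up to [giso]. *)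
Inductive giso : game -> game -> Prop :=
  GisoI L R L' R' : lift_rel giso L L' -> lift_rel giso R R' -> giso (Game L R) (Game L' R').

Lemma gisoE L R L' R' :
  giso (Game L R) (Game L' R') <-> lift_rel giso L L' /\ lift_rel giso R R'.
Proof. by split=> [h | [? ?]]; [inversion h | constructor]. Qed.

Lemma lift_rel_refl (T : Type) (r : T -> T -> Prop) s :
  (forall g, List.In g s -> r g g) -> lift_rel r s s.
Proof. by move=> rr; split=> g gs; exists g => //; apply: rr. Qed.

Lemma lift_rel_map2 (T U : Type) (r : T -> T -> Prop) (r' : U -> U -> Prop)
    (f f' : T -> U) s t :
  (forall g h, List.In g s -> r g h -> r' (f g) (f' h)) ->
  lift_rel r s t -> lift_rel r' (map f s) (map f' t).
Proof.
move=> rr' [st ts]; split=> _ /In_map [x xs ->].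
- by have [y ys rxy] := st x xs; exists (f' y); [apply/In_map; exists y | apply: rr'].
- by have [y ys ryx] := ts x xs; exists (f y); [apply/In_map; exists y | apply: rr'].
Qed.

Lemma lift_rel_map (T U : Type) (r : U -> U -> Prop) (f f' : T -> U) s :
  (forall g, List.In g s -> r (f g) (f' g)) -> lift_rel r (map f s) (map f' s).
Proof.
move=> rr; apply: (lift_rel_map2 (r := eq)); last exact: lift_rel_refl.
by move=> g _ gs <-; apply: rr.
Qed.

Lemma lift_rel_sym (T : Type) (r : T -> T -> Prop) s t :
  (forall g h, List.In g s -> r g h -> r h g) -> lift_rel r s t -> lift_rel r t s.
Proof.
move=> rs [st ts]; split.
- by move=> h /ts [g gs rgh]; exists g => //; apply: rs.
- by move=> g gs; have [h ht rgh] := st g gs; exists h => //; apply: rs.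
Qed.

Lemma lift_rel_trans (T : Type) (r : T -> T -> Prop) s t u :
  (forall g h k, List.In g s -> r g h -> r h k -> r g k) ->
  lift_rel r s t -> lift_rel r t u -> lift_rel r s u.
Proof.
move=> rt [st ts] [tu ut]; split.
- move=> g gs; have [h /tu [k ku rhk] rgh] := st g gs.
  by exists k => //; apply: rt gs rgh rhk.
- by move=> k /ut [h /ts [g gs rgh] rhk]; exists g => //; apply: rt gs rgh rhk.
Qed.

Lemma lift_rel_cat (T : Type) (r : T -> T -> Prop) s1 s2 t1 t2 :
  lift_rel r s1 t1 -> lift_rel r s2 t2 -> lift_rel r (s1 ++ s2) (t1 ++ t2).
Proof.
case=> [st1 ts1] [st2 ts2]; split.
- by move=> g /In_cat [/st1 | /st2] [h hi rgh]; exists h => //; apply/In_cat; [left | right].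
- by move=> h /In_cat [/ts1 | /ts2] [g gi rgh]; exists g => //; apply/In_cat; [left | right].
Qed.

Lemma lift_rel_has (T : Type) (r : T -> T -> Prop) (p q : pred T) s t :
  (forall g h, List.In g s -> r g h -> p g = q h) -> lift_rel r s t -> has p s = has q t.
Proof.
move=> pq [st ts]; apply/idP/idP => /has_In [g gi pg].
- by have [h hi rgh] := st g gi; apply/has_In; exists h; rewrite // -(pq g h).
- by have [h hi rhg] := ts g gi; apply/has_In; exists h; rewrite // (pq h g).
Qed.

Lemma giso_refl G : giso G G.
Proof. by elim/game_tree_ind: G => L R IL IR; constructor; apply: lift_rel_refl. Qed.

Lemma giso_sym G H : giso G H -> giso H G.
Proof.
elim/game_tree_ind: G H => L R IL IR [L' R'] /gisoE [isoL isoR].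
by constructor; apply: lift_rel_sym; eauto.
Qed.

Lemma giso_trans G H K : giso G H -> giso H K -> giso G K.
Proof.
elim/game_tree_ind: G H K => L R IL IR [L1 R1] [L2 R2] /gisoE [isoL isoR] /gisoE [isoL' isoR'].
by constructor; apply: lift_rel_trans; eauto.
Qed.

Lemma giso_win G H : giso G H -> win G = win H.
Proof.
elim/game_tree_ind: G H => L R IL IR [L' R'] /gisoE [isoL isoR] /=.
congr pair.
- by apply: (lift_rel_has (r := giso)) isoL => g h gi gh; rewrite /rw (IL g gi h gh).
- by apply: (lift_rel_has (r := giso)) isoR => g h gi gh; rewrite /lw (IR g gi h gh).
Qed.

Lemma lift_giso_trans s t u : lift_rel giso s t -> lift_rel giso t u -> lift_rel giso s u.
Proof. by apply: lift_rel_trans => g h k _; apply: giso_trans. Qed.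

Lemma lift_giso_catC s t : lift_rel giso (s ++ t) (t ++ s).
Proof.
by split=> g /In_cat gi; exists g; rewrite ?In_cat; first [tauto | exact: giso_refl].
Qed.

Lemma giso_addC G H : giso (gadd G H) (gadd H G).
Proof.
elim/game_tree_ind: G H => GL GR IL IR; elim/game_tree_ind => HL HR JL JR.
rewrite !gaddE; constructor; (apply: lift_giso_trans; last exact: lift_giso_catC);
  by apply: lift_rel_cat; apply: lift_rel_map => g gi; auto.
Qed.

Lemma giso_addr G G' H : giso G G' -> giso (gadd G H) (gadd G' H).
Proof.
elim/game_tree_ind: G G' H => GL GR IL IR [GL' GR'] H /gisoE [isoL isoR].
elim/game_tree_ind: H => HL HR JL JR.
rewrite !gaddE; constructor; apply: lift_rel_cat.
- by apply: lift_rel_map2 isoL => g g' gi; apply: IL.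
- by apply: lift_rel_map => h hi; apply: JL.
- by apply: lift_rel_map2 isoR => g g' gi; apply: IR.
- by apply: lift_rel_map => h hi; apply: JR.
Qed.

Lemma giso_add G G' H H' : giso G G' -> giso H H' -> giso (gadd G H) (gadd G' H').
Proof.
move=> isoG isoH; apply: giso_trans (giso_addr _ isoG) _.
apply: giso_trans (giso_addC _ _) _; exact: giso_trans (giso_addr _ isoH) (giso_addC _ _).
Qed.

Lemma giso_addA G H K : giso (gadd (gadd G H) K) (gadd G (gadd H K)).
Proof.
elim/game_tree_ind: G H K => GL GR IL IR; elim/game_tree_ind => HL HR JL JR.
elim/game_tree_ind => KL KR ML MR.
rewrite !gaddE; constructor; rewrite !map_cat -!map_comp -!catA;
  by repeat apply: lift_rel_cat; apply: lift_rel_map => g gi /=; rewrite -?gaddE; auto.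
Qed.

Lemma giso_addACA G H K M :
  giso (gadd (gadd G H) (gadd K M)) (gadd (gadd G K) (gadd H M)).
Proof.
apply: giso_trans (giso_addA _ _ _) _; apply: giso_trans _ (giso_sym (giso_addA _ _ _)).
apply: giso_add (giso_refl G) _.
apply: giso_trans (giso_sym (giso_addA _ _ _)) _; apply: giso_trans _ (giso_addA _ _ _).
exact: giso_add (giso_addC H K) (giso_refl M).
Qed.

Lemma giso_neg G H : giso G H -> giso (gneg G) (gneg H).
Proof.
elim/game_tree_ind: G H => L R IL IR [L' R'] /gisoE [isoL isoR].
by rewrite !gnegE; constructor; apply: lift_rel_map2; eauto.
Qed.

Lemma giso_lw G H : giso G H -> lw G = lw H.
Proof. by move/giso_win; rewrite /lwins_first => ->. Qed.

Lemma giso_rw G H : giso G H -> rw G = rw H.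
Proof. by move/giso_win; rewrite /rwins_first => ->. Qed.

(** * Outcomes of sums and negatives, and the order on games *)

Lemma gneg_add G H : gneg (gadd G H) = gadd (gneg G) (gneg H).
Proof.
elim/game_tree_ind: G H => GL GR IL IR; elim/game_tree_ind => HL HR JL JR.
rewrite [gneg (Game GL GR)]gnegE [gneg (Game HL HR)]gnegE !gaddE gnegE !map_cat -!map_comp.
by congr (Game (_ ++ _) (_ ++ _)); apply: eq_map_In => g gi /=; rewrite -?gnegE; auto.
Qed.

Lemma gnegK : involutive gneg.
Proof.
elim/game_tree_ind => L R IL IR; rewrite !gnegE -!map_comp.
by congr Game; rewrite -[RHS]map_id; apply: eq_map_In => g gi /=; auto.
Qed.

Lemma win_neg G : win (gneg G) = ((win G).2, (win G).1).
Proof.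
elim/game_tree_ind: G => L R IL IR; rewrite gnegE /= !has_map.
have eq_refl_in (s : seq game) : lift_rel eq s s by apply: lift_rel_refl.
congr pair; apply: (lift_rel_has _ (eq_refl_in _)) => g _ gi <- /=.
- by rewrite (IR g gi).
- by rewrite (IL g gi).
Qed.

Lemma lw_neg G : lw (gneg G) = rw G. Proof. by rewrite /lwins_first win_neg. Qed.
Lemma rw_neg G : rw (gneg G) = lw G. Proof. by rewrite /rwins_first win_neg. Qed.

Lemma nrwP L R : ~~ rw (Game L R) <-> forall x, List.In x R -> lw x.
Proof. by rewrite rwE -all_predC all_In; split=> h x /h /=; rewrite negbK. Qed.

Lemma lw_add_movel G H g :
  List.In g (leftopts G) -> ~~ rw (gadd g H) -> lw (gadd G H).
Proof.
case: G H => [GL GR] [HL HR] gi ng; rewrite lw_addE; apply/orP; left.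
by apply/has_In; exists g.
Qed.

Lemma lw_add_mover G H h :
  List.In h (leftopts H) -> ~~ rw (gadd G h) -> lw (gadd G H).
Proof.
case: G H => [GL GR] [HL HR] hi nh; rewrite lw_addE; apply/orP; right.
by apply/has_In; exists h.
Qed.

Lemma rw_add_mover G H h :
  List.In h (rightopts H) -> ~~ lw (gadd G h) -> rw (gadd G H).
Proof.
case: G H => [GL GR] [HL HR] hi nh; rewrite rw_addE; apply/orP; right.
by apply/has_In; exists h.
Qed.

Lemma rw_add_movel G H g :
  List.In g (rightopts G) -> ~~ lw (gadd g H) -> rw (gadd G H).
Proof.
case: G H => [GL GR] [HL HR] gi ng; rewrite rw_addE; apply/orP; left.
by apply/has_In; exists g.
Qed.

Lemma left_outcome_add G H :
  [/\ ~~ rw G -> ~~ rw H -> ~~ rw (gadd G H),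
      lw G -> ~~ rw H -> lw (gadd G H) &
      ~~ rw G -> lw H -> lw (gadd G H)].
Proof.
elim/game_tree_ind: G H => GL GR IL IR; elim/game_tree_ind => HL HR JL JR; split.
- move=> /[dup] nG /nrwP nGR /[dup] nH /nrwP nHR.
  rewrite gaddE; apply/nrwP => _ /In_cat [] /In_map [x xi ->].
  + by have [_ + _] := IR x xi (Game HL HR); apply; first exact: nGR.
  + by have [_ _ +] := JR x xi; apply; last exact: nHR.
- move=> /has_In [x xi nx] nH; apply: (lw_add_movel (g := x)) => //.
  by have [+ _ _] := IL x xi (Game HL HR); apply.
- move=> nG /has_In [x xi nx]; apply: (lw_add_mover (h := x)) => //.
  by have [+ _ _] := JL x xi; apply.
Qed.

Lemma nrw_add G H : ~~ rw G -> ~~ rw H -> ~~ rw (gadd G H).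
Proof. by case: (left_outcome_add G H). Qed.

Lemma lw_addl G H : lw G -> ~~ rw H -> lw (gadd G H).
Proof. by case: (left_outcome_add G H). Qed.

Lemma nlw_add G H : ~~ lw G -> ~~ lw H -> ~~ lw (gadd G H).
Proof. by rewrite -!rw_neg gneg_add; apply: nrw_add. Qed.

Lemma rw_addl G H : rw G -> ~~ lw H -> rw (gadd G H).
Proof.
by rewrite -[rw G]lw_neg -[lw H]rw_neg -[rw (gadd G H)]lw_neg gneg_add; apply: lw_addl.
Qed.

Lemma outcome_add_zero G Z :
  ~~ lw Z -> ~~ rw Z -> lw (gadd G Z) = lw G /\ rw (gadd G Z) = rw G.
Proof.
move=> nlZ nrZ; split.
- by case lG: (lw G); [apply: lw_addl | apply/negbTE/nlw_add; rewrite ?lG].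
- by case rG: (rw G); [apply: rw_addl | apply/negbTE/nrw_add; rewrite ?rG].
Qed.

Lemma nlw_add_neg G : ~~ lw (gadd G (gneg G)).
Proof.
elim/game_tree_ind: G => L R IL IR; rewrite [gneg _]gnegE gaddE.
rewrite lwE -all_predC; apply/all_In => g /In_cat [/In_map [x xi ->] | ].
  by rewrite /= negbK; apply: (rw_add_mover (h := gneg x)); [apply/In_map; exists x | exact: IL].
move=> /In_map [y /In_map [x xi ->] ->] /=; rewrite negbK.
by apply: (rw_add_movel (g := x)) => //; exact: IR.
Qed.

Lemma nrw_add_neg G : ~~ rw (gadd G (gneg G)).
Proof.
by rewrite -lw_neg gneg_add gnegK (giso_lw (giso_addC _ _)) nlw_add_neg.
Qed.

Definition gle G H := ~~ rw (gadd H (gneg G)).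

Lemma nlw_gle G H : ~~ lw (gadd G (gneg H)) = gle G H.
Proof. by rewrite /gle -rw_neg gneg_add gnegK (giso_rw (giso_addC _ _)). Qed.

Lemma nrw_gle G H : ~~ rw (gadd G (gneg H)) = gle H G.
Proof. by []. Qed.

Lemma geq_gle G H : Defs.geq G H <-> gle G H /\ gle H G.
Proof. by rewrite /Defs.geq nlw_gle. Qed.

Lemma gleE G H : gle G H =
  all (fun gl => ~~ gle H gl) (leftopts G) && all (fun hr => ~~ gle hr G) (rightopts H).
Proof.
case: G H => [GL GR] [HL HR]; rewrite {1}/gle [gneg (Game GL GR)]gnegE rw_addE negb_or.
rewrite has_map andbC -!all_predC; congr andb; by apply: eq_all => x /=; rewrite -?gnegE nlw_gle.
Qed.

Lemma gle_refl G : gle G G.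
Proof. exact: nrw_add_neg. Qed.

Lemma gle_trans G H K : gle G H -> gle H K -> gle G K.
Proof.
move=> leGH leHK; have := nrw_add leHK leGH.
have regroup : giso (gadd (gadd K (gneg H)) (gadd H (gneg G)))
                    (gadd (gadd K (gneg G)) (gadd H (gneg H))).
  apply: giso_trans (giso_add (giso_refl _) (giso_addC _ _)) _.
  apply: giso_trans (giso_addACA _ _ _ _) _.
  exact: giso_add (giso_refl _) (giso_addC _ _).
rewrite (giso_rw regroup).
by case: (outcome_add_zero (gadd K (gneg G)) (nlw_add_neg H) (nrw_add_neg H)) => _ ->.
Qed.

Lemma gle_add2r G H K : gle (gadd G K) (gadd H K) = gle G H.
Proof.
rewrite /gle gneg_add (giso_rw (giso_addACA _ _ _ _)).
by case: (outcome_add_zero (gadd H (gneg G)) (nlw_add_neg K) (nrw_add_neg K)) => _ ->.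
Qed.

Lemma gle_add2l G H K : gle (gadd K G) (gadd K H) = gle G H.
Proof.
rewrite /gle (giso_rw (giso_add (giso_addC K H) (giso_neg (giso_addC K G)))).
exact: gle_add2r.
Qed.

Lemma gle_of_geq_double G H :
  gle G H || gle H G -> Defs.geq (gadd G G) (gadd H H) -> gle G H /\ gle H G.
Proof.
move=> cmp /geq_gle [leGGHH leHHGG].
case/orP: cmp => [leGH | leHG]; split=> //.
- by rewrite -(gle_add2r H G H); apply: gle_trans leHHGG _; rewrite gle_add2l.
- by rewrite -(gle_add2r G H G); apply: gle_trans leGGHH _; rewrite gle_add2l.
Qed.

Lemma geq_double G H : gle G H -> gle H G -> Defs.geq (gadd G G) (gadd H H).
Proof.
move=> leGH leHG; apply/geq_gle; split.
- by apply: (gle_trans (H := gadd H G)); rewrite ?gle_add2r ?gle_add2l.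
- by apply: (gle_trans (H := gadd G H)); rewrite ?gle_add2r ?gle_add2l.
Qed.
(** * Dyadic rationals and their canonical forms *)

(* A definition rather than a notation, so that [lra] treats [eps k] as an atom. *)
Definition eps (k : nat) : rat := 1 / 2 ^+ k.

Definition expo (q : rat) : nat := logn 2 `|denq q|.

Definition dyadic_at (j : nat) (q : rat) := q * 2 ^+ j \is a Num.int.

Lemma pow2_neq0 k : (2 ^+ k : rat) != 0.
Proof. by rewrite expf_neq0. Qed.

Lemma pow2_natz k : (2 ^+ k : rat) = ((2 ^ k)%N%:Z)%:~R.
Proof. by rewrite -natrX. Qed.

Lemma eps_gt0 k : 0 < eps k.
Proof. by rewrite /eps div1r invr_gt0 exprn_gt0. Qed.

Lemma eps_le j k : (j <= k)%N -> eps k <= eps j.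
Proof. by move=> jk; rewrite /eps !div1r lef_pV2 ?posrE ?exprn_gt0 // ler_eXn2l // ltr1n. Qed.

Lemma eps_lt j k : (j < k)%N -> eps k < eps j.
Proof. by move=> jk; rewrite /eps !div1r ltf_pV2 ?posrE ?exprn_gt0 // ltr_eXn2l // ltr1n. Qed.

Lemma eps_half k : eps k = eps k.+1 + eps k.+1.
Proof. by rewrite /eps exprS; field; rewrite pow2_neq0. Qed.

Lemma dyadic_atP j q : reflect (exists z : int, q * 2 ^+ j = z%:~R) (dyadic_at j q).
Proof. exact: intrP. Qed.

Lemma dyadic_atD j x y : dyadic_at j x -> dyadic_at j y -> dyadic_at j (x + y).
Proof. by rewrite /dyadic_at mulrDl; apply: rpredD. Qed.

Lemma dyadic_atN j x : dyadic_at j (- x) = dyadic_at j x.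
Proof. by rewrite /dyadic_at mulNr rpredN. Qed.

Lemma dyadic_at_eps j : dyadic_at j (eps j).
Proof. by rewrite /dyadic_at /eps mul1r mulVf ?pow2_neq0. Qed.

Lemma dyadic_at_le j k q : (j <= k)%N -> dyadic_at j q -> dyadic_at k q.
Proof.
move/subnKC <-; rewrite /dyadic_at exprD mulrA => qj.
by apply: rpredM qj _; apply: rpredX; apply: (rpred_nat _ 2).
Qed.

Lemma dyadic_at_step n x y : dyadic_at n x -> dyadic_at n y -> x < y -> x + eps n <= y.
Proof.
move=> /dyadic_atP [a xa] /dyadic_atP [b yb] xy.
have pos : 0 < (2 ^+ n : rat) by rewrite exprn_gt0.
have : x * 2 ^+ n < y * 2 ^+ n by rewrite ltr_pM2r.
rewrite xa yb ltr_int => ab.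
rewrite -(ler_pM2r pos) mulrDl /eps mul1r mulVf ?pow2_neq0 // xa yb.
have : (a + 1)%:~R <= b%:~R :> rat by rewrite ler_int; lia.
by rewrite intrD.
Qed.

Lemma odd_intE (a : int) : odd `|a|%N -> exists w : int, a = 2 * w + 1.
Proof. by case: a => n h; [exists (n./2)%:Z | exists (- (n./2)%:Z - 1)]; lia. Qed.

Lemma even_intE (a : int) : ~~ odd `|a|%N -> exists w : int, a = 2 * w.
Proof. by case: a => n h; [exists (n./2)%:Z | exists (- (n.+1./2)%:Z)]; lia. Qed.

Lemma dyadic_denq k q : denq q = (2 ^ k)%N%:Z -> dyadic q /\ expo q = k.
Proof. by move=> dk; split; [exists k | rewrite /expo dk absz_nat pfactorK]. Qed.

Lemma numden_odd_frac (a : int) k : odd `|a|%N ->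
  numq (a%:~R / 2 ^+ k) = a /\ denq (a%:~R / 2 ^+ k) = (2 ^ k)%N%:Z.
Proof.
move=> odd_a; have den_gt0 : 0 < (2 ^ k)%N%:Z by rewrite ltz_nat expn_gt0.
have cop : coprime `|a| `|(2 ^ k)%N%:Z|.
  by rewrite absz_nat; case: k {den_gt0} => [|k]; rewrite ?coprimen1 ?coprime_pexpr ?coprimen2.
rewrite pow2_natz coprimeq_num // coprimeq_den // gt_eqF // gtr0_sg // mul1r.
by rewrite gtr0_norm.
Qed.

Lemma dyadic_numq q : dyadic q -> q * 2 ^+ expo q = (numq q)%:~R.
Proof. by case=> k dk; rewrite numqE dk /expo dk absz_nat pfactorK // pow2_natz. Qed.

Lemma odd_numq q : dyadic q -> (0 < expo q)%N -> odd `|numq q|%N.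
Proof.
case=> k dk; rewrite /expo dk absz_nat pfactorK // => k_gt0.
have := coprime_num_den q; rewrite dk absz_nat.
by rewrite coprime_pexpr // coprimen2.
Qed.

Lemma dyadic_at_expo q : dyadic q -> dyadic_at (expo q) q.
Proof. by move/dyadic_numq; rewrite /dyadic_at => ->; apply: intr_int. Qed.

Lemma dyadic_at_dyadic j q : dyadic_at j q -> dyadic q /\ (expo q <= j)%N.
Proof.
elim: j q => [|j IH] q /dyadic_atP [z qz].
  rewrite expr0 mulr1 in qz; rewrite qz /dyadic /expo denq_int.
  by split; first exists 0%N.
have [odd_z | even_z] := boolP (odd `|z|%N).
  have -> : q = z%:~R / 2 ^+ j.+1 by rewrite -qz mulfK ?pow2_neq0.
  by have [_ /dyadic_denq [? ->]] := numden_odd_frac j.+1 odd_z.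
have [w zw] := even_intE even_z.
suff /IH [dq le_j] : dyadic_at j q by split; last exact: leqW.
apply/dyadic_atP; exists w; apply: (mulIf (x := 2)) => //.
by rewrite -mulrA -exprSr qz zw intrM mulrC.
Qed.

Lemma dyadic_atW j q : dyadic_at j q -> dyadic q.
Proof. by case/dyadic_at_dyadic. Qed.

Lemma dyadic_eps k : dyadic (eps k).
Proof. exact: dyadic_atW (dyadic_at_eps k). Qed.

Lemma dyadicD x y : dyadic x -> dyadic y -> dyadic (x + y).
Proof.
move=> /dyadic_at_expo dx /dyadic_at_expo dy.
apply: (dyadic_atW (j := maxn (expo x) (expo y))); apply: dyadic_atD.
- exact: dyadic_at_le (leq_maxl _ _) dx.
- exact: dyadic_at_le (leq_maxr _ _) dy.
Qed.

Lemma dyadicN x : dyadic x -> dyadic (- x).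
Proof.
by move/dyadic_at_expo => dx; apply: (dyadic_atW (j := expo x)); rewrite dyadic_atN.
Qed.

Lemma dyadicB x y : dyadic x -> dyadic y -> dyadic (x - y).
Proof. by move=> dx dy; apply/dyadicD/dyadicN. Qed.

Lemma expo_odd q (a : int) k : odd `|a|%N -> q * 2 ^+ k = a%:~R -> expo q = k.
Proof.
move=> odd_a qa; have -> : q = a%:~R / 2 ^+ k by rewrite -qa mulfK ?pow2_neq0.
by have [_ /dyadic_denq []] := numden_odd_frac k odd_a.
Qed.

Lemma dyadic_at_sub_eps_expo m j : dyadic m -> expo m = j.+1 -> dyadic_at j (m - eps j.+1).
Proof.
move=> dm ej; have := dyadic_numq dm; rewrite ej => ma.
have := odd_numq dm; rewrite ej => /(_ isT) /odd_intE [w aw].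
apply/dyadic_atP; exists w; rewrite aw in ma.
have -> : m = (2 * w + 1)%:~R / 2 ^+ j.+1 by rewrite -ma mulfK ?pow2_neq0.
by rewrite /eps intrD intrM exprS; field; rewrite pow2_neq0.
Qed.

Lemma expo_half_step m p : dyadic m -> (expo m <= p)%N ->
  expo (m + eps p.+1) = p.+1 /\ expo (m - eps p.+1) = p.+1.
Proof.
move=> dm le_mp; have /dyadic_atP [z mz] := dyadic_at_le le_mp (dyadic_at_expo dm).
have m_eq : m = z%:~R / 2 ^+ p by rewrite -mz mulfK ?pow2_neq0.
split; [apply: (@expo_odd _ (2 * z + 1)) | apply: (@expo_odd _ (2 * z - 1))]; try lia;
  by rewrite /eps ?intrD ?intrB intrM m_eq exprS; field; rewrite pow2_neq0.
Qed.

Lemma canon_intE (a : int) : canon a%:~R = canon_int a.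
Proof. by rewrite /canon numq_int denq_int. Qed.

Lemma canon_dyE k (a : int) : canon_dy a k = canon (a%:~R / 2 ^+ k).
Proof.
elim: k a => [|k IH] a; first by rewrite expr0 divr1 canon_intE.
have [odd_a | even_a] := boolP (odd `|a|%N).
  by rewrite /canon; have [-> ->] := numden_odd_frac k.+1 odd_a; rewrite absz_nat pfactorK.
have [w aw] := even_intE even_a.
have a2w : (a %/ 2)%Z = w by rewrite aw mulrC mulzK.
rewrite /= (negPf even_a) a2w IH aw intrM exprSr; congr canon.
by field; rewrite pow2_neq0.
Qed.

Definition lopt (q : rat) : seq rat :=
  if (expo q == 0%N) && (q <= 0) then [::] else [:: q - eps (expo q)].

Definition ropt (q : rat) : seq rat :=
  if (expo q == 0%N) && (0 <= q) then [::] else [:: q + eps (expo q)].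

Lemma canon_int_opts (a : int) : canon_int a =
  Game (map canon (lopt a%:~R)) (map canon (ropt a%:~R)).
Proof.
rewrite /lopt /ropt /eps /expo denq_int /= expr0 divr1 lerz0 ler0z.
case: a => [[|n] | n] //=.
- by rewrite -[n.+1]addn1 PoszD intrD addrK canon_intE.
- have -> : iter n (fun g => Game [::] [:: g]) gzero = canon_int (- n%:Z) by case: n.
  by rewrite NegzE intrN -addn1 PoszD intrD opprD addrNK -intrN canon_intE.
Qed.

Lemma canon_opts q : dyadic q -> canon q = Game (map canon (lopt q)) (map canon (ropt q)).
Proof.
move=> dq; have qa := dyadic_numq dq; case ek: (expo q) qa => [|k] qa.
  by rewrite expr0 mulr1 in qa; rewrite qa canon_intE canon_int_opts.
have := odd_numq dq; rewrite ek => /(_ isT) odd_a.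
have [w aw] := odd_intE odd_a.
have qw : q = (2 * w + 1)%:~R / 2 ^+ k.+1 by rewrite -aw -qa mulfK ?pow2_neq0.
have a1 : ((numq q + 1) %/ 2)%Z = w + 1.
  by rewrite aw -addrA -[1 + 1]/(2%:Z) -[X in _ + X]mulr1 -mulrDr mulrC mulzK.
have a0 : ((numq q - 1) %/ 2)%Z = w by rewrite aw addrK mulrC mulzK.
rewrite /lopt /ropt {1}/canon -/(expo q) ek /= odd_a !canon_dyE a0 a1 qw.
congr (Game [:: canon _] [:: canon _]);
  by rewrite /eps ?intrD intrM exprS; field; rewrite pow2_neq0.
Qed.

Lemma lopt_val q x : x \in lopt q -> x = q - eps (expo q).
Proof. by rewrite /lopt; case: ifP => _; rewrite ?inE // => /eqP. Qed.

Lemma ropt_val q x : x \in ropt q -> x = q + eps (expo q).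
Proof. by rewrite /ropt; case: ifP => _; rewrite ?inE // => /eqP. Qed.

Lemma lopt_lt q x : x \in lopt q -> x < q.
Proof. by move/lopt_val ->; have := eps_gt0 (expo q); lra. Qed.

Lemma ropt_gt q x : x \in ropt q -> q < x.
Proof. by move/ropt_val ->; have := eps_gt0 (expo q); lra. Qed.

Lemma lopt_dyadic q x : dyadic q -> x \in lopt q -> dyadic x.
Proof. by move=> dq /lopt_val ->; apply/dyadicB/dyadic_eps. Qed.

Lemma ropt_dyadic q x : dyadic q -> x \in ropt q -> dyadic x.
Proof. by move=> dq /ropt_val ->; apply/dyadicD/dyadic_eps. Qed.

Lemma lopt_ropt_between x y : dyadic x -> dyadic y -> x < y ->
  has (fun yl => x <= yl) (lopt y) || has (fun xr => xr <= y) (ropt x).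
Proof.
move=> dx dy xy; have ax := dyadic_at_expo dx; have ay := dyadic_at_expo dy.
have [le_xy | lt_yx] := leqP (expo x) (expo y).
  have := dyadic_at_step (dyadic_at_le le_xy ax) ay xy.
  rewrite /lopt; case: ifP => [/andP [/eqP y0 yle0] | _] /=; last by lra.
  have x0 : expo x = 0%N by apply/eqP; rewrite -leqn0 -y0.
  by rewrite /ropt /eps x0 y0 /= expr0 divr1 ifF /=; lra.
have := dyadic_at_step ax (dyadic_at_le (ltnW lt_yx) ay) xy.
by rewrite /ropt (gtn_eqF (leq_ltn_trans (leq0n _) lt_yx)) /= => ->; rewrite orbT.
Qed.

Lemma opts_le x y : dyadic x -> dyadic y ->
  all (fun xl => ~~ (y <= xl)) (lopt x) && all (fun yr => ~~ (yr <= x)) (ropt y) = (x <= y).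
Proof.
move=> dx dy; apply/idP/idP => [/andP [xlP yrP] | xy].
  rewrite leNgt; apply/negP => yx.
  by case/orP: (lopt_ropt_between dy dx yx) => /hasP [z zi]; apply/negP;
    [apply: (allP xlP) | apply: (allP yrP)].
apply/andP; split; apply/allP => z zi /=; rewrite -ltNge.
- exact: lt_le_trans (lopt_lt zi) xy.
- exact: le_lt_trans xy (ropt_gt zi).
Qed.

Lemma leftopts_canon q : dyadic q -> leftopts (canon q) = map canon (lopt q).
Proof. by move/canon_opts ->. Qed.

Lemma rightopts_canon q : dyadic q -> rightopts (canon q) = map canon (ropt q).
Proof. by move/canon_opts ->. Qed.

Lemma canon_ind (P : rat -> Prop) :
  (forall x, dyadic x -> {in lopt x, forall z, P z} -> {in ropt x, forall z, P z} -> P x) ->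
  forall x, dyadic x -> P x.
Proof.
move=> step x; move: {2}(canon x) (erefl (canon x)) => G.
elim/game_tree_ind: G x => L R IL IR x ex dx.
have [eL eR] : map canon (lopt x) = L /\ map canon (ropt x) = R.
  by move: ex; rewrite canon_opts // => -[].
apply: step => // z zi.
- by apply: (IL (canon z)); [rewrite -eL; apply/In_map; exists z; first exact: In_mem |
    | exact: lopt_dyadic zi].
- by apply: (IR (canon z)); [rewrite -eR; apply/In_map; exists z; first exact: In_mem |
    | exact: ropt_dyadic zi].
Qed.

Lemma canon_gle x y : dyadic x -> dyadic y -> gle (canon x) (canon y) = (x <= y).
Proof.
move=> dx dy; suff [] : gle (canon x) (canon y) = (x <= y) /\ gle (canon y) (canon x) = (y <= x).
  by [].
move: x dx y dy; apply: canon_ind => x dx IHl IHr.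
apply: canon_ind => y dy JHl JHr.
rewrite [gle (canon x) _]gleE [gle (canon y) _]gleE.
rewrite !leftopts_canon ?rightopts_canon // !all_map -(opts_le dx dy) -(opts_le dy dx).
split; congr andb; apply: eq_in_all => z zi /=.
- by rewrite (IHl z zi y dy).2.
- by rewrite (JHr z zi).2.
- by rewrite (JHl z zi).1.
- by rewrite (IHr z zi y dy).1.
Qed.

(** * Balls around a dyadic *)

Lemma ballN m d : ball m (- d) = Game [:: canon (m - d)] [:: canon (m + d)].
Proof. by rewrite /ball opprK. Qed.

Lemma canon_add_eps_half m p : dyadic m -> (expo m <= p)%N ->
  canon (m + eps p.+1) = Game [:: canon m] [:: canon (m + eps p)].
Proof.
move=> dm le_mp; have [e_hi _] := expo_half_step dm le_mp.
rewrite canon_opts /lopt /ropt ?e_hi /=; last exact: dyadicD dm (dyadic_eps _).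
by congr (Game [:: canon _] [:: canon _]); rewrite ?(eps_half p); lra.
Qed.

Lemma canon_sub_eps_half m p : dyadic m -> (expo m <= p)%N ->
  canon (m - eps p.+1) = Game [:: canon (m - eps p)] [:: canon m].
Proof.
move=> dm le_mp; have [_ e_lo] := expo_half_step dm le_mp.
rewrite canon_opts /lopt /ropt ?e_lo /=; last exact/dyadicD/dyadicN/dyadic_eps.
by congr (Game [:: canon _] [:: canon _]); rewrite ?(eps_half p); lra.
Qed.

Lemma ball_canon_comparable m d : dyadic m -> dyadic d -> 0 < d ->
  gle (ball m (- d)) (canon m) || gle (canon m) (ball m (- d)).
Proof.
move=> dm dd d_gt0; rewrite ballN; set B := Game _ _.
have [dlo dhi] := (dyadicB dm dd, dyadicD dm dd).
have [/hasP [r ri rB] | noR] := boolP (has (fun r => gle (canon r) B) (ropt m)).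
- apply/orP; right; rewrite gleE leftopts_canon // all_map /= canon_gle // andbT.
  apply/andP; split; last by rewrite -ltNge; lra.
  apply/allP => l li /=; apply/negP => Bl; move: (gle_trans rB Bl).
  rewrite canon_gle; [| exact: ropt_dyadic ri | exact: lopt_dyadic li].
  by have := lopt_lt li; have := ropt_gt ri; lra.
- apply/orP; left; rewrite gleE rightopts_canon // all_map /= canon_gle // andbT.
  apply/andP; split; first by rewrite -ltNge; lra.
  by move: noR; rewrite -all_predC.
Qed.

Lemma ball_canon_equiv m k : dyadic m -> (expo m <= k)%N ->
  gle (ball m (- eps k)) (canon m) /\ gle (canon m) (ball m (- eps k)).
Proof.
move=> dm le_mk; have := eps_le le_mk; have := eps_gt0 k.
have [dlo dhi] := (dyadicB dm (dyadic_eps k), dyadicD dm (dyadic_eps k)).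
rewrite ballN; set B := Game _ _ => eps_pos eps_mk; split.
- rewrite gleE rightopts_canon // all_map /= canon_gle // -ltNge andbT.
  apply/andP; split; first lra.
  apply/allP => r ri /=; have dr := ropt_dyadic dm ri.
  by rewrite gleE negb_and /= andbT canon_gle // negbK (ropt_val ri); lra.
- rewrite gleE leftopts_canon // all_map /= canon_gle // -ltNge andbT.
  apply/andP; split; last lra.
  apply/allP => l li /=; have dl := lopt_dyadic dm li.
  by rewrite gleE negb_and /= andbT canon_gle // negbK (lopt_val li); lra.
Qed.

(* If [k < expo m], the left option [l] of [m] lies on the coarser grid of
   step [2 * eps (expo m)], so the right option of [l] exceeds [m]; hence
   [ball m (- eps k) <= l], contradicting [m <= ball m (- eps k)]. *)
Lemma ball_canon_expo m k : dyadic m ->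
  gle (ball m (- eps k)) (canon m) -> gle (canon m) (ball m (- eps k)) -> (expo m <= k)%N.
Proof.
move=> dm; rewrite ballN; set B := Game _ _ => BM MB.
rewrite leqNgt; apply/negP => lt_km.
case ej: (expo m) lt_km => [|j] // /ltnSE le_kj.
have [dl le_lj] := dyadic_at_dyadic (dyadic_at_sub_eps_expo dm ej).
move: MB; rewrite gleE leftopts_canon // /lopt ej /= andbT => /andP [/negP nBl _]; apply: nBl.
rewrite gleE rightopts_canon // all_map /= andbT.
have := @eps_lt k j.+1 le_kj; have := eps_gt0 j.+1 => eps_pos eps_jk.
have dlo : dyadic (m - eps k) by apply/dyadicB/dyadic_eps.
apply/andP; split; first by rewrite canon_gle // -ltNge; lra.
apply/allP => r ri /=; apply/negP => /gle_trans /(_ BM).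
have dr := ropt_dyadic dl ri; rewrite canon_gle // (ropt_val ri).
by have := eps_le le_lj; have := eps_half j; lra.
Qed.

Lemma gord_ball_gmone m p : dyadic m -> (expo m <= p)%N ->
  gle (gord (ball m (- eps p)) gmone) (canon (m - eps p.+1)) /\
  gle (canon (m - eps p.+1)) (gord (ball m (- eps p)) gmone).
Proof.
move=> dm le_mp; have [BM MB] := ball_canon_equiv dm le_mp.
have dlo' : dyadic (m - eps p.+1) by apply/dyadicB/dyadic_eps.
have dlo : dyadic (m - eps p) by apply/dyadicB/dyadic_eps.
have dhi : dyadic (m + eps p) by apply/dyadicD/dyadic_eps.
have := eps_gt0 p.+1; have := eps_half p.
rewrite ballN in BM MB *; set B := Game _ _ => eps_half eps_pos.
have -> : gord B gmone = Game [:: canon (m - eps p)] [:: canon (m + eps p); B] by [].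
have c_lo := canon_sub_eps_half dm le_mp.
split; rewrite gleE /=.
- rewrite (canon_gle dlo' dlo) -ltNge andbT; apply/andP; split; first lra.
  by rewrite c_lo /= andbT gleE /= BM !andbF.
- rewrite andbT; apply/and3P; split.
  + by rewrite c_lo /= andbT gleE /= gle_refl.
  + by rewrite (canon_gle dhi dlo') -ltNge; lra.
  + by apply/negP => /(gle_trans MB); rewrite (canon_gle dm dlo'); lra.
Qed.

Lemma gord_ball_gone m p : dyadic m -> (expo m <= p)%N ->
  gle (gord (ball m (- eps p)) gone) (canon (m + eps p.+1)) /\
  gle (canon (m + eps p.+1)) (gord (ball m (- eps p)) gone).
Proof.
move=> dm le_mp; have [BM MB] := ball_canon_equiv dm le_mp.
have dhi' : dyadic (m + eps p.+1) by apply/dyadicD/dyadic_eps.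
have dlo : dyadic (m - eps p) by apply/dyadicB/dyadic_eps.
have dhi : dyadic (m + eps p) by apply/dyadicD/dyadic_eps.
have := eps_gt0 p.+1; have := eps_half p.
rewrite ballN in BM MB *; set B := Game _ _ => eps_half eps_pos.
have -> : gord B gone = Game [:: canon (m - eps p); B] [:: canon (m + eps p)] by [].
have c_hi := canon_add_eps_half dm le_mp.
split; rewrite gleE /=.
- rewrite andbT -andbA; apply/and3P; split.
  + by rewrite (canon_gle dhi' dlo) -ltNge; lra.
  + by apply/negP => /gle_trans /(_ BM); rewrite (canon_gle dhi' dm); lra.
  + by rewrite c_hi /= andbT gleE /= gle_refl !andbF.
- rewrite andbT; apply/andP; split; last by rewrite (canon_gle dhi dhi') -ltNge; lra.
  by rewrite c_hi /= andbT gleE /= MB /= !andbF.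
Qed.

Lemma gord_ball_eqdom m p : dyadic m -> (expo m <= p)%N ->
  eqdom (gord (ball m (- eps p)) zero_ul) (ball m (- eps p.+1)).
Proof.
move=> dm le_mp; have [B1c c_B1] := gord_ball_gmone dm le_mp.
have [B2c c_B2] := gord_ball_gone dm le_mp.
have dlo' : dyadic (m - eps p.+1) by apply/dyadicB/dyadic_eps.
have dhi' : dyadic (m + eps p.+1) by apply/dyadicD/dyadic_eps.
have dlo : dyadic (m - eps p) by apply/dyadicB/dyadic_eps.
have dhi : dyadic (m + eps p) by apply/dyadicD/dyadic_eps.
have := eps_gt0 p.+1; have := eps_half p => eps_half eps_pos.
set B := ball m (- eps p).
have -> : gord B zero_ul =
  Game [:: canon (m - eps p); gord B gmone] [:: canon (m + eps p); gord B gone].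
  by rewrite /B ballN.
rewrite ballN /eqdom /=; split; [|split; [|split]].
- move=> g [<- | [<- | []]]; exists (gneg (canon (m - eps p.+1))); try by left.
  + by rewrite nlw_gle (canon_gle dlo dlo'); lra.
  + by rewrite nlw_gle.
- move=> g [<- | [<- | []]]; exists (gneg (canon (m + eps p.+1))); try by left.
  + by rewrite nrw_gle (canon_gle dhi' dhi); lra.
  + by rewrite nrw_gle.
- by move=> g [<- | []]; exists (gord B gone); [right; left | rewrite nlw_gle].
- by move=> g [<- | []]; exists (gord B gmone); [right; left | rewrite nrw_gle].
Qed.

Unset Implicit Arguments.

Theorem lemma3p3 (m : rat) (p : nat) :
  dyadic m ->
  balanced m (- (1 / (2 ^+ p))) ->
  eqdom (gord (ball m (- (1 / (2 ^+ p)))) zero_ul) (ball m (- (1 / (2 ^+ p.+1)))) /\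
  balanced m (- (1 / (2 ^+ p.+1))).
Proof.
rewrite -/(eps p) -/(eps p.+1) => dm bal.
have cmp := ball_canon_comparable dm (dyadic_eps p) (eps_gt0 p).
have [BM MB] := gle_of_geq_double cmp bal.
have le_mp := ball_canon_expo dm BM MB.
split; first exact: gord_ball_eqdom.
have [BM' MB'] := ball_canon_equiv dm (leqW le_mp).
exact: geq_double.
Qed.
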